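(* Let $n,m\ge 1$ and $N\ge 2$ be integers, let $h:\mathbb{R}^n\to\mathbb{R}^m$ be a function, let $R\in\mathbb{R}^{m\times m}$ be symmetric positive definite, and let $\bm{z}\in\mathbb{R}^m$. Let $\bm{x}_1^f,\dots,\bm{x}_N^f\in\mathbb{R}^n$ be a forecast ensemble with mean $\bar{\bm{x}}^f=\frac1N\sum_i\bm{x}_i^f$ and anomaly matrix $A^f=[\bm{x}_1^f-\bar{\bm{x}}^f,\dots,\bm{x}_N^f-\bar{\bm{x}}^f]\in\mathbb{R}^{n\times N}$, and set $P^f=\frac{1}{N-1}A^f(A^f)^\top$. Let $\bm{z}_i^f=h(\bm{x}_i^f)$, $\bar{\bm{z}}^f=\frac1N\sum_i\bm{z}_i^f$, $\mathcal{Z}^f=[\bm{z}_1^f-\bar{\bm{z}}^f,\dots,\bm{z}_N^f-\bar{\bm{z}}^f]$, $B^f=\bigl(\mathcal{Z}^f(\mathcal{Z}^f)^\top+(N-1)R\bigr)^{-1}$, $K=\frac{1}{N-1}A^f(\mathcal{Z}^f)^\top\bigl(\frac{1}{N-1}\mathcal{Z}^f(\mathcal{Z}^f)^\top+R\bigr)^{-1}$ (so $K=A^f(\mathcal{Z}^f)^\top B^f$), and $\bar{\bm{x}}^a=\bar{\bm{x}}^f+K(\bm{z}-\bar{\bm{z}}^f)$. Define $\bm{x}_i^{rc}=\bar{\bm{x}}^a+(\bm{x}_i^f-\bar{\bm{x}}^f)$, $\bm{z}_i^{rc}=h(\bm{x}_i^{rc})$, $\bar{\bm{z}}^{rc}=\frac1N\sum_i\bm{z}_i^{rc}$,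 $\mathcal{Z}^{rc}=[\bm{z}_1^{rc}-\bar{\bm{z}}^{rc},\dots,\bm{z}_N^{rc}-\bar{\bm{z}}^{rc}]$, $P_{xz}^{rc}=\frac{1}{N-1}A^f(\mathcal{Z}^{rc})^\top$, $S^{rc}=\frac{1}{N-1}\mathcal{Z}^{rc}(\mathcal{Z}^{rc})^\top+R$, $\Gamma^{rc}=\mathcal{Z}^{rc}(\mathcal{Z}^{rc})^\top+(N-1)R$, and $$P^{a,rc}=P^f+KS^{rc}K^\top-K(P_{xz}^{rc})^\top-P_{xz}^{rc}K^\top .$$ Let $T^{rc}\in\mathbb{R}^{N\times N}$ be the symmetric positive semidefinite square root $$T^{rc}=\Bigl(I-(\mathcal{Z}^f)^\top B^f\mathcal{Z}^{rc}-(\mathcal{Z}^{rc})^\top B^f\mathcal{Z}^f+(\mathcal{Z}^f)^\top B^f\Gamma^{rc}B^f\mathcal{Z}^f\Bigr)^{1/2}$$ (the matrix inside is positive semidefinite), and let $\widetilde{A}^a=A^fT^{rc}$. Assume the update is accepted, i.e. $\operatorname{tr}(P^{a,rc})\le\operatorname{tr}(P^f)$. Then $$\frac{1}{N-1}\widetilde{A}^a(\widetilde{A}^a)^\top=P^{a,rc}.$$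
   Context: This is the ''recalibrated ensemble transform Kalman filter'' analysis step for a measurement model $\bm{z}=h(\bm{x})+\bm{v}$, $\bm{v}\sim\mathcal{N}(\bm{0},R)$; the candidate analysis ensemble is $\bar{\bm{x}}^a\bm{1}^\top+\widetilde{A}^a$. *)

From HB Require Import structures.
From mathcomp Require Import all_boot all_order all_algebra.
Set Implicit Arguments. Unset Strict Implicit. Unset Printing Implicit Defensive.
Import Order.TTheory GRing.Theory Num.Theory.
Local Open Scope ring_scope.

Definition ens_mean (F : fieldType) (k N : nat) (v : 'I_N -> 'cV[F]_k) : 'cV[F]_k :=
  (N%:R)^-1 *: \sum_(i < N) v i.

Definition anomaly (F : fieldType) (k N : nat) (v : 'I_N -> 'cV[F]_k) : 'M[F]_(k, N) :=
  \matrix_(a < k, i < N) (v i a 0 - ens_mean v a 0).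

Definition sym_mx (F : fieldType) (k : nat) (M : 'M[F]_k) : Prop := M^T = M.

Definition posdef_mx (F : realFieldType) (k : nat) (M : 'M[F]_k) : Prop :=
  sym_mx M /\ forall v : 'cV[F]_k, v != 0 -> 0 < (v^T *m M *m v) 0 0.

Definition psd_mx (F : realFieldType) (k : nat) (M : 'M[F]_k) : Prop :=
  sym_mx M /\ forall v : 'cV[F]_k, 0 <= (v^T *m M *m v) 0 0.

Definition is_psd_sqrt (F : realFieldType) (k : nat) (T M : 'M[F]_k) : Prop :=
  psd_mx T /\ T *m T = M.

Section RETKF.
Variables (F : realFieldType) (n m N : nat).
Variables (h : 'cV[F]_n -> 'cV[F]_m) (Rm : 'M[F]_m) (z : 'cV[F]_m)
          (xf : 'I_N -> 'cV[F]_n).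

Definition c1 : F := ((N.-1)%:R)^-1.
Definition xbar_f := ens_mean xf.
Definition Af := anomaly xf.
Definition Pf : 'M[F]_n := c1 *: (Af *m Af^T).
Definition zf (i : 'I_N) := h (xf i).
Definition zbar_f := ens_mean zf.
Definition Zf := anomaly zf.
Definition Bf : 'M[F]_m := invmx (Zf *m Zf^T + (N.-1)%:R *: Rm).
Definition Kgain : 'M[F]_(n, m) :=
  c1 *: (Af *m Zf^T) *m invmx (c1 *: (Zf *m Zf^T) + Rm).
Definition xbar_a := xbar_f + Kgain *m (z - zbar_f).
Definition x_rc (i : 'I_N) := xbar_a + (xf i - xbar_f).
Definition z_rc (i : 'I_N) := h (x_rc i).
Definition Z_rc := anomaly z_rc.
Definition Pxz_rc : 'M[F]_(n, m) := c1 *: (Af *m Z_rc^T).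
Definition S_rc : 'M[F]_m := c1 *: (Z_rc *m Z_rc^T) + Rm.
Definition Gamma_rc : 'M[F]_m := Z_rc *m Z_rc^T + (N.-1)%:R *: Rm.
Definition Pa_rc : 'M[F]_n :=
  Pf + Kgain *m S_rc *m Kgain^T - Kgain *m Pxz_rc^T - Pxz_rc *m Kgain^T.
Definition Minner : 'M[F]_N :=
  1%:M - Zf^T *m Bf *m Z_rc - Z_rc^T *m Bf *m Zf
       + Zf^T *m Bf *m Gamma_rc *m Bf *m Zf.
End RETKF.

(* With B := (Z^f Z^f^T + (N-1) R)^-1 the Kalman gain is K = A^f Z^f^T B and
   S^rc = Gamma^rc / (N-1).  Expanding A^f M A^f^T, where M is the matrix under
   the square root, gives term by term
   A^f A^f^T - K Z^rc A^f^T - A^f Z^rc^T K^T + K Gamma^rc K^T = (N-1) P^{a,rc};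
   since T is symmetric with T T = M, A~^a A~^a^T = A^f M A^f^T. *)
From HB Require Import structures.
From mathcomp Require Import all_boot all_order all_algebra.
Import Order.TTheory GRing.Theory Num.Theory.
Local Open Scope ring_scope.

Lemma mulmx_trmx_diag_ge0 (F : realFieldType) (l : nat) (u : 'rV[F]_l) :
  0 <= (u *m u^T) 0 0.
Proof. by rewrite !mxE; apply: sumr_ge0 => j _; rewrite mxE -expr2 sqr_ge0. Qed.

Lemma unitmx_gram_addZ_posdef (F : realFieldType) (m N : nat)
    (Z : 'M[F]_(m, N)) (R : 'M[F]_m) (a : F) :
  0 < a -> posdef_mx R -> Z *m Z^T + a *: R \in unitmx.
Proof.
move=> a_gt0 [_ R_pos]; rewrite unitmxE unitfE; apply/negP => /det0P [v v_nz].
have form_eq : (v *m (Z *m Z^T + a *: R) *m v^T) 0 0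
             = (v *m Z *m (v *m Z)^T) 0 0 + a * (v^T^T *m R *m v^T) 0 0.
  by rewrite trmxK mulmxDr mulmxDl -scalemxAr -scalemxAl trmx_mul !mulmxA !mxE.
move=> v_ker; have := R_pos v^T; rewrite trmx_eq0 v_nz => /(_ isT) vRv_gt0.
have : 0 < (v *m (Z *m Z^T + a *: R) *m v^T) 0 0.
  by rewrite form_eq ltr_wpDl ?mulmx_trmx_diag_ge0 ?mulr_gt0.
by rewrite v_ker mul0mx mxE ltxx.
Qed.

Lemma scale_mulmx_invmx_addZ (F : fieldType) (p q : nat) (a : F)
    (X : 'M[F]_(p, q)) (Y R : 'M[F]_q) :
  a != 0 -> Y + a *: R \in unitmx ->
  a^-1 *: X *m invmx (a^-1 *: Y + R) = X *m invmx (Y + a *: R).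
Proof.
move=> a_nz YR_unit.
have -> : a^-1 *: Y + R = a^-1 *: (Y + a *: R).
  by rewrite scalerDr scalerA mulVf // scale1r.
rewrite invmxZ ?unitmxZ ?unitfE ?invr_eq0 // invrK.
by rewrite -scalemxAl -scalemxAr scalerA mulVf // scale1r.
Qed.

Lemma mulmx_sandwich_expand (R : comPzRingType) (n m N : nat)
    (A : 'M[R]_(n, N)) (Zf Zr : 'M[R]_(m, N)) (B G : 'M[R]_m) :
  B^T = B ->
  let K := A *m Zf^T *m B in
  A *m (1%:M - Zf^T *m B *m Zr - Zr^T *m B *m Zf
        + Zf^T *m B *m G *m B *m Zf) *m A^T
  = A *m A^T + K *m G *m K^T - K *m (A *m Zr^T)^T - A *m Zr^T *m K^T.
Proof.
move=> B_sym K; rewrite /K !trmx_mul !trmxK B_sym.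
rewrite !mulmxDr !mulmxDl !mulmxN !mulNmx mulmx1 !mulmxA.
by rewrite -!addrA; congr (_ + _); rewrite addrA addrC.
Qed.

Section RecalibratedETKF.
Variables (F : realFieldType) (n m N : nat).
Variables (h : 'cV[F]_n -> 'cV[F]_m) (Rm : 'M[F]_m) (z : 'cV[F]_m)
          (xf : 'I_N -> 'cV[F]_n).
Hypothesis N_gt1 : (1 < N)%N.
Hypothesis Rm_posdef : posdef_mx Rm.

Let Nm1_gt0 : 0 < (N.-1)%:R :> F.
Proof. by rewrite ltr0n -subn1 subn_gt0. Qed.

Let c1_mul_Nm1 : c1 F N * (N.-1)%:R = 1 :> F.
Proof. by rewrite mulVf ?gt_eqF. Qed.

Lemma Bf_sym : (Bf h Rm xf)^T = Bf h Rm xf.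
Proof.
case: Rm_posdef => Rm_sym _.
by rewrite /Bf trmx_inv linearD /= trmx_mul trmxK linearZ /= Rm_sym.
Qed.

Lemma Kgain_Bf : Kgain h Rm xf = Af xf *m (Zf h xf)^T *m Bf h Rm xf.
Proof.
rewrite /Kgain /c1 scale_mulmx_invmx_addZ ?gt_eqF //.
exact: unitmx_gram_addZ_posdef.
Qed.

Lemma S_rc_Gamma_rc : S_rc h Rm z xf = c1 F N *: Gamma_rc h Rm z xf.
Proof. by rewrite /S_rc /Gamma_rc scalerDr scalerA c1_mul_Nm1 scale1r. Qed.

Lemma Pa_rc_Minner :
  Pa_rc h Rm z xf = c1 F N *: (Af xf *m Minner h Rm z xf *m (Af xf)^T).
Proof.
rewrite /Minner mulmx_sandwich_expand ?Bf_sym // -Kgain_Bf.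
rewrite /Pa_rc /Pf S_rc_Gamma_rc /Pxz_rc [(_ *: _)^T]linearZ /=.
by rewrite -!scalemxAr -!scalemxAl !scalerDr !scalerN.
Qed.

End RecalibratedETKF.

Theorem proposition2 (F : realFieldType) (n m N : nat)
    (hn : (1 <= n)%N) (hm : (1 <= m)%N) (hN : (2 <= N)%N)
    (h : 'cV[F]_n -> 'cV[F]_m) (Rm : 'M[F]_m) (z : 'cV[F]_m)
    (xf : 'I_N -> 'cV[F]_n) (T : 'M[F]_N) :
  posdef_mx Rm ->
  psd_mx (Minner h Rm z xf) ->
  is_psd_sqrt T (Minner h Rm z xf) ->
  \tr (Pa_rc h Rm z xf) <= \tr (Pf xf) ->
  ((N.-1)%:R)^-1 *: ((Af xf *m T) *m (Af xf *m T)^T) = Pa_rc h Rm z xf.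
Proof.
move=> Rm_posdef _ [[T_sym _] TT_Minner] _.
rewrite Pa_rc_Minner // -TT_Minner.
by rewrite trmx_mul T_sym !mulmxA.
Qed.
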